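(* Let $d\ge 2$ and let $\mathcal{S}^{(d)}_2$ be the complementary channel of the $1\to 2$ universal qudit cloner. Then the following operators form a set of rank-one Kraus operators for $\mathcal{S}^{(d)}_2$: $$\tfrac{1}{\sqrt{d+1}}|1\rangle\langle1|,\ \dots,\ \tfrac{1}{\sqrt{d+1}}|d\rangle\langle d|,\qquad \tfrac{1}{\sqrt{4^{d-1}(d+1)}}\,|\psi(\vec n)\rangle\langle\psi(\vec n)|\,\sigma_z(\vec n),$$ where $|\psi(\vec n)\rangle=\sum_{j=1}^d i^{n_j}|j\rangle$, $\sigma_z(\vec n)=\sum_{j=1}^d(-1)^{n_j}|j\rangle\langle j|$, and $\vec n=(n_1,\dots,n_d)$ ranges over all vectors with $n_1=0$ and $n_j\in\{0,1,2,3\}$ for $j\ge2$ (here $i=\sqrt{-1}$). That is, $\mathcal{S}^{(d)}_2(\rho)=\sum_m E_m\rho E_m^\dagger$ and $\sum_m E_m^\dagger E_m=I$ for this family $\{E_m\}$.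
   Context: The $1\to 2$ universal qudit cloner is the isometry $|l\rangle\otimes R\mapsto\sum_{j=1}^d\sqrt{\tfrac{1+\delta_{lj}}{d+1}}\,|\vec e_l+\vec e_j\rangle\otimes R_j$, where $|\vec m\rangle$ is the normalized completely symmetric two-qudit state with occupation vector $\vec m$ and $\{R_j\}_{j=1}^d$ are orthonormal auxiliary (environment) states. Its complementary channel $\mathcal{S}^{(d)}_2$ is obtained by applying the isometry and tracing out the two-qudit clone system; the environment is identified with $\mathbb{C}^d$ via $R_j\leftrightarrow|j\rangle$. With this identification $\mathcal{S}^{(d)}_2(\rho)=\frac{1}{d+1}\big(\mathrm{Tr}(\rho)I+\rho^{T}\big)$, the transpose taken in the basis $\{|j\rangle\}$. *)

(* Complex scalars: an arbitrary numClosedFieldType C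
   (covers algC and the complex numbers R[i] of any real closed field). *)
From HB Require Import structures.
From mathcomp Require Import all_boot all_order all_algebra.
Set Implicit Arguments. Unset Strict Implicit. Unset Printing Implicit Defensive.
Import Order.TTheory GRing.Theory Num.Theory.
Local Open Scope ring_scope.

Section Cloner.
Variables (C : numClosedFieldType) (d : nat).

Definition adjmx (m n : nat) (A : 'M[C]_(m, n)) : 'M[C]_(n, m) :=
  map_mx Num.conj (A^T).

(* Coefficient <a b | e_l + e_j> of the normalized completely symmetric
   two-qudit state with occupation vector e_l + e_j. *)
Definition symc (l j a b : 'I_d) : C :=
  if l == j then ((a == l) && (b == l))%:R
  else (((a == l) && (b == j)) + ((a == j) && (b == l)))%:R / sqrtC 2%:R.

(* Coefficient of |a b> (x) R_r in the image of |l> under the 1->2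
   universal cloner isometry  |l> |-> sum_j sqrt((1+delta_lj)/(d+1)) |e_l+e_j> R_j. *)
Definition cloner_iso (l a b r : 'I_d) : C :=
  sqrtC ((1 + (l == r))%:R / (d.+1)%:R) * symc l r a b.

(* Complementary channel S_2^(d): apply the isometry and trace out the two
   clone qudits (indices a b); the environment R_r is identified with |r>. *)
Definition cloner_compl (rho : 'M[C]_d) : 'M[C]_d :=
  \matrix_(r, r') \sum_(a < d) \sum_(b < d) \sum_(l < d) \sum_(l' < d)
     cloner_iso l a b r * rho l l' * (cloner_iso l' a b r')^*.

Definition Ediag (j : 'I_d) : 'M[C]_d :=
  (sqrtC (d.+1)%:R)^-1 *: delta_mx j j.

Definition psi (n : {ffun 'I_d -> 'I_4}) : 'cV[C]_d :=
  \col_j ('i ^+ (n j)).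

Definition sigz (n : {ffun 'I_d -> 'I_4}) : 'M[C]_d :=
  diag_mx (\row_j ((-1) ^+ (n j))).

Definition Evec (n : {ffun 'I_d -> 'I_4}) : 'M[C]_d :=
  (sqrtC (4 ^ d.-1 * d.+1)%:R)^-1 *: (psi n *m adjmx (psi n) *m sigz n).

(* n_1 = 0 (first coordinate, index 0 in 'I_d) *)
Definition first0 (n : {ffun 'I_d -> 'I_4}) : bool :=
  [forall i : 'I_d, (val i == 0%N) ==> (val (n i) == 0%N)].

End Cloner.

Arguments symc {C d}.
Arguments cloner_iso {C d}.
Arguments cloner_compl {C d}.
Arguments Ediag {C d}.
Arguments psi {C d}.
Arguments sigz {C d}.
Arguments Evec {C d}.
Arguments first0 {d}.

From HB Require Import structures.
From mathcomp Require Import all_boot all_order all_algebra.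
From mathcomp Require Import ring zify.
Set Implicit Arguments. Unset Strict Implicit. Unset Printing Implicit Defensive.
Import Order.TTheory GRing.Theory Num.Theory.
Local Open Scope ring_scope.

(* Since sigma_z(n) maps the conjugate of psi(n) to psi(n), the Kraus operator
   E_n is c psi(n) psi(n)^T with c = (4^(d-1)(d+1))^(-1/2).  Every entry of
   sum_n E_n rho E_n^* and of sum_n E_n^* E_n is therefore a character sum
   over (Z/4)^(d-1), and orthogonality of characters keeps exactly the index
   pairs that agree as multisets.  This yields (Tr rho I + rho^T - diag rho)/(d+1)
   and d/(d+1) I; the diagonal Kraus operators supply diag rho/(d+1) and
   I/(d+1).  On the channel side, orthonormality of the symmetric states
   |e_l + e_j> gives S(rho) = (Tr rho I + rho^T)/(d+1). *)


Lemma perm_eq_seq1 (T : eqType) (x y : T) : perm_eq [:: x] [:: y] = (x == y).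
Proof. by apply/idP/eqP => [p | ->//]; case: (perm_small_eq (s2 := [:: y]) isT p). Qed.

Lemma perm_eq_pair (T : eqType) (a b c e : T) :
  perm_eq [:: a; b] [:: c; e] = ((a == c) && (b == e)) || ((a == e) && (b == c)).
Proof.
have [<-|neq_ac] := eqVneq a c.
  by rewrite perm_cons perm_eq_seq1 /=; have [->|] := eqVneq a e; rewrite ?eqxx ?orbb ?orbF.
apply/idP/andP => [pab | [/eqP-> /eqP->]]; last first.
  by rewrite perm_sym (perm_catC [:: c] [:: e]).
have := perm_mem pab a; rewrite !inE eqxx (negbTE neq_ac) /= => /esym/eqP ea; subst a.
by rewrite perm_sym (perm_catC [:: c] [:: e]) perm_cons perm_eq_seq1 eq_sym in pab; rewrite eqxx.
Qed.

Lemma sum_count_mem (T : finType) (s : seq T) (f : T -> nat) :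
  (\sum_j count_mem j s * f j)%N = (\sum_(a <- s) f a)%N.
Proof.
elim: s => [|a s IHs]; first by rewrite big_nil big1.
rewrite big_cons -IHs /=; under eq_bigr do rewrite mulnDl.
by rewrite big_split /= (bigD1 a) //= eqxx mul1n big1 ?addn0 // => j; rewrite eq_sym => /negbTE ->.
Qed.

Lemma count_mem_except (T : finType) (j0 : T) (s t : seq T) :
  size s = size t -> (forall j, j != j0 -> count_mem j s = count_mem j t) ->
  count_mem j0 s = count_mem j0 t.
Proof.
move=> eq_st eq_cnt.
have size_sum u : size u = (count_mem j0 u + \sum_(j | j != j0) count_mem j u)%N.
  rewrite -(bigD1 j0 (P := predT)) //= -sum1_size -sum_count_mem.
  by under eq_bigr do rewrite muln1.
by move: eq_st; rewrite !size_sum (eq_bigr _ eq_cnt) => /addIn.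
Qed.

Section ImaginaryUnit.
Variable C : numClosedFieldType.

Lemma expr_i4 : 'i ^+ 4 = 1 :> C.
Proof. by rewrite (exprM _ 2 2) sqrCi sqrrN expr1n. Qed.

Lemma expr_i_mod4 m : 'i ^+ m = 'i ^+ (m %% 4) :> C.
Proof. by rewrite {1}(divn_eq m 4) exprD mulnC exprM expr_i4 expr1n mul1r. Qed.

Lemma conj_expr_i k : ('i ^+ k)^* = 'i ^+ (3 * k) :> C.
Proof. by rewrite rmorphXn /= conjCi exprM exprS sqrCi mulrN1. Qed.

Lemma sum_expr_i_mul m :
  \sum_(k < 4) 'i ^+ (m * k) = if (4 %| m)%N then 4%:R else 0 :> C.
Proof.
under eq_bigr do rewrite exprM.
rewrite !big_ord_recl big_ord0 /= /bump /= !add1n addr0 expr_i_mod4 /dvdn.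
have i2 := sqrCi C.
have : (m %% 4 < 4)%N by rewrite ltn_pmod.
case: (m %% 4)%N => [|[|[|[|//]]]] _ /=;
  rewrite -!exprM /= ?(expr_i_mod4 (_ * _)) /= ?expr0 ?expr1 ?[_ ^+ 3]exprS ?i2; ring.
Qed.

End ImaginaryUnit.

Section CharacterSum.
Variables (C : numClosedFieldType) (d : nat).

Lemma sum_first0_expr_i_prod (m : 'I_d -> nat) :
  \sum_(n : {ffun 'I_d -> 'I_4} | first0 n) 'i ^+ (\sum_j m j * n j)%N =
  \prod_(j < d) (if val j == 0%N then 1 else if (4 %| m j)%N then 4%:R else 0) :> C.
Proof.
pose F j (k : 'I_4) : C := ((val j == 0%N) ==> (val k == 0%N))%:R * 'i ^+ (m j * k).
transitivity (\sum_(n : {ffun 'I_d -> 'I_4}) \prod_j F j (n j)).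
  rewrite big_mkcond; apply: eq_bigr => n _; rewrite big_split /= -expr_sum.
  have [n0 | /forallPn[j /[!negb_imply] /andP[j0 /negbTE nj0]]] := boolP (first0 n).
    by rewrite [X in _ = X * _]big1 ?mul1r // => j _; move/forallP: n0 => /(_ j) ->.
  by rewrite (bigD1 j) //= j0 nj0 !mul0r.
rewrite -bigA_distr_bigA; apply: eq_bigr => j _; rewrite /F.
case: eqP => [_ | _]; last by rewrite -sum_expr_i_mul; apply: eq_bigr => k _; rewrite mul1r.
rewrite (bigD1 ord0) //= muln0 expr0 mulr1 big1 ?addr0 // => k /negbTE nk0.
by rewrite -val_eqE in nk0; rewrite nk0 mul0r.
Qed.

Lemma sum_first0_expr_i (m : 'I_d -> nat) :
  \sum_(n : {ffun 'I_d -> 'I_4} | first0 n) 'i ^+ (\sum_j m j * n j)%N =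
  if [forall j : 'I_d, (val j != 0%N) ==> (4 %| m j)%N] then (4 ^ d.-1)%:R else 0 :> C.
Proof.
rewrite sum_first0_expr_i_prod.
case: ifP => [/forallP m4 | /negbT/forallPn[j /[!negb_imply] /andP[j0 /negbTE nm4]]].
  transitivity (\prod_(j < d) (if val j == 0%N then 1 else 4%:R : C)).
    by apply: eq_bigr => j _; case: eqP => // /eqP j0; rewrite (implyP (m4 j) j0).
  case: d {m m4} => [|d']; first by rewrite big_ord0.
  by rewrite big_ord_recl mul1r prodr_const card_ord natrX.
by rewrite (bigD1 j) //= (negbTE j0) nm4 mul0r.
Qed.

(* The factor 3 stands for -1 modulo 4, i.e. for complex conjugation. *)
Lemma sum_first0_expr_i_perm (s t : seq 'I_d) :
  size s = size t -> (size t <= 3)%N ->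
  \sum_(n : {ffun 'I_d -> 'I_4} | first0 n)
     'i ^+ (\sum_(a <- s) n a + 3 * \sum_(b <- t) n b)%N =
  if perm_eq s t then (4 ^ d.-1)%:R else 0 :> C.
Proof.
move=> eq_st t_le3.
have expE n : (\sum_(a <- s) n a + 3 * \sum_(b <- t) n b =
               \sum_j (count_mem j s + 3 * count_mem j t) * n j)%N.
  rewrite -(sum_count_mem s) -(sum_count_mem t) big_distrr -big_split /=.
  by apply: eq_bigr => j _; rewrite mulnDl mulnA.
under eq_bigr do rewrite expE.
rewrite sum_first0_expr_i; congr (if _ then _ else _).
have dvd4E j : (4 %| count_mem j s + 3 * count_mem j t)%N = (count_mem j s == count_mem j t).
  have := count_size (pred1 j) s; have := count_size (pred1 j) t.
  rewrite eq_st; move: (count _ s) (count _ t) => a b.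
  move=> /leq_trans/(_ t_le3) + /leq_trans/(_ t_le3).
  by case: b => [|[|[|[|]]]]; case: a => [|[|[|[|]]]].
apply/forallP/idP => [cnt | perm_st j]; last first.
  by apply/implyP => _; rewrite dvd4E; apply/eqP/permP.
have cnt_n0 j : val j != 0%N -> count_mem j s = count_mem j t.
  by move=> /(implyP (cnt j)); rewrite dvd4E => /eqP.
apply/allP => j _; apply/eqP.
have [j_0 | /cnt_n0 //] := eqVneq (val j) 0%N.
apply: count_mem_except => // j' nj'; apply: cnt_n0.
by apply: contra nj' => /eqP j'_0; apply/eqP/val_inj; rewrite j'_0 j_0.
Qed.

End CharacterSum.

Lemma sum_indicator (R : nzSemiRingType) (I : finType) (F : I -> R) p :
  \sum_a (a == p)%:R * F a = F p.
Proof.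
rewrite (bigD1 p) //= eqxx mul1r big1 ?addr0 // => a /negbTE ->.
by rewrite mul0r.
Qed.

Lemma sum_pair_indicator (R : nzSemiRingType) (I : finType) (F : I -> I -> R) p q :
  \sum_a \sum_b ((a == p) && (b == q))%:R * F a b = F p q.
Proof.
rewrite (bigD1 p) //= [X in _ + X]big1 ?addr0 => [|a /negbTE ap]; last first.
  by rewrite big1 // => b _; rewrite ap mul0r.
rewrite (bigD1 q) //= !eqxx /= mul1r [X in _ + X]big1 ?addr0 // => b /negbTE ->.
by rewrite mul0r.
Qed.

Lemma sum_diag_indicator (R : nzSemiRingType) (I : finType) (F : I -> I -> R) :
  \sum_a \sum_b (a == b)%:R * F a b = \sum_a F a a.
Proof.
apply: eq_bigr => a _; rewrite (bigD1 a) //= eqxx /= mul1r big1 ?addr0 // => b.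
by rewrite eq_sym => /negbTE ->; rewrite mul0r.
Qed.

Lemma sum_perm_pair_indicator (R : nzSemiRingType) (I : finType) (F : I -> I -> R) l r :
  \sum_a \sum_b (perm_eq [:: a; b] [:: l; r])%:R * F a b = F l r + (l != r)%:R * F r l.
Proof.
have [<-|neq_lr] := eqVneq l r.
  rewrite mul0r addr0 -[RHS](sum_pair_indicator F l l).
  by apply: eq_bigr => a _; apply: eq_bigr => b _; rewrite perm_eq_pair orbb.
rewrite mul1r -(sum_pair_indicator F l r) -(sum_pair_indicator F r l) -big_split.
apply: eq_bigr => a _; rewrite -big_split; apply: eq_bigr => b _.
rewrite /= -mulrDl -natrD perm_eq_pair; congr (_%:R * _).
by have [->|_] := eqVneq a l; rewrite ?(negbTE neq_lr) /= ?orbF ?addn0.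
Qed.

Lemma mul_delta_mx_mx (R : pzSemiRingType) m n p q (A : 'M[R]_(n, p))
    (i : 'I_m) j k (l : 'I_q) :
  delta_mx i j *m A *m delta_mx k l = A j k *: delta_mx i l.
Proof.
apply/matrixP => a b; rewrite !mxE (bigD1 k) //= big1 => [|c /negbTE nck]; last first.
  by rewrite [delta_mx k l c b]mxE nck mulr0.
rewrite [delta_mx k l k b]mxE eqxx addr0 mxE (bigD1 j) //= big1 => [|e /negbTE nej].
  by rewrite !mxE eqxx !andbT addr0 mulr_natl !mulr_natr -mulrnA mulnb.
by rewrite mxE nej andbF mul0r.
Qed.

Lemma adjmxE (C : numClosedFieldType) m p (A : 'M[C]_(m, p)) i j :
  adjmx A i j = (A j i)^*.
Proof. by rewrite !mxE. Qed.

Section Kraus.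
Variables (C : numClosedFieldType) (d : nat).

Let c : C := (sqrtC (4 ^ d.-1 * d.+1)%:R)^-1.

Let conj_c : c^* = c.
Proof. by rewrite geC0_conj // invr_ge0 sqrtC_ge0 ler0n. Qed.

Let sqr_c : c * c * (4 ^ d.-1)%:R = (d.+1)%:R^-1.
Proof.
rewrite -invfM -expr2 sqrtCK natrM invfM mulrAC mulVf ?mul1r //.
by rewrite pnatr_eq0 expn_eq0.
Qed.

Lemma EvecE (n : {ffun 'I_d -> 'I_4}) a b : Evec n a b = c * 'i ^+ (n a + n b).
Proof.
rewrite /Evec !mxE (bigD1 b) //= big1 ?addr0 => [|k /negbTE nkb]; last first.
  by rewrite /sigz !mxE nkb mulr0n mulr0.
rewrite /sigz !mxE eqxx mulr1n big_ord1 !mxE conj_expr_i -(sqrCi C) -exprM -!exprD.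
by rewrite (expr_i_mod4 _ (n a + _ + _)%N) (expr_i_mod4 _ (n a + n b)%N); congr (_ * 'i ^+ _); lia.
Qed.

Lemma Evec_conj_entry (n : {ffun 'I_d -> 'I_4}) (rho : 'M[C]_d) r r' :
  (Evec n *m rho *m adjmx (Evec n)) r r' =
  c * c * \sum_x \sum_y
    rho x y * 'i ^+ (\sum_(a <- [:: r; x]) n a + 3 * \sum_(b <- [:: y; r']) n b)%N.
Proof.
rewrite mxE; under eq_bigr do rewrite mxE mulr_suml.
rewrite exchange_big mulr_sumr /=; apply: eq_bigr => x _.
rewrite mulr_sumr; apply: eq_bigr => y _.
rewrite adjmxE !EvecE !big_cons !big_nil !addn0 rmorphM /= conj_c conj_expr_i.
by rewrite mulnDr !exprD; ring.
Qed.

Lemma sum_Evec_conj (rho : 'M[C]_d) :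
  \sum_(n : {ffun 'I_d -> 'I_4} | first0 n) Evec n *m rho *m adjmx (Evec n) =
  (d.+1)%:R^-1 *: (\tr rho *: 1%:M + rho^T - diag_mx (\row_j rho j j)).
Proof.
apply/matrixP => r r'; rewrite summxE.
under eq_bigr do rewrite Evec_conj_entry.
rewrite -mulr_sumr exchange_big /=; under eq_bigr do rewrite exchange_big /=.
under eq_bigr do under eq_bigr do
  rewrite -mulr_sumr sum_first0_expr_i_perm // perm_eq_pair -mulrb mulrnAr -mulr_natr.
under eq_bigr do under eq_bigr do rewrite mulrAC.
under eq_bigr do rewrite -mulr_suml.
rewrite -mulr_suml mulrA mulrAC sqr_c !mxE; congr (_ * _).
have [<-|neq_rr'] := eqVneq r r'.
  rewrite (eq_bigr (fun x => \sum_y (x == y)%:R * rho x y)) => [|x _].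
    by rewrite sum_diag_indicator mulr1 mulr1n addrK.
  apply: eq_bigr => y _; rewrite mulrC; congr ((nat_of_bool _)%:R * _).
  have [->|neq_xy] := eqVneq x y; first by rewrite orbT.
  rewrite orbF; apply/negbTE/negP => /andP[/eqP ry /eqP xr].
  by rewrite xr ry eqxx in neq_xy.
rewrite (eq_bigr (fun x : 'I_d => \sum_y ((x == r') && (y == r))%:R * rho x y)) => [|x _].
  by rewrite sum_pair_indicator mulr0 mulr0n add0r subr0.
by apply: eq_bigr => y _; rewrite mulrC orbF andbC (eq_sym r).
Qed.

Lemma Evec_adj_entry (n : {ffun 'I_d -> 'I_4}) r r' :
  (adjmx (Evec n) *m Evec n) r r' =
  c * c * d%:R * 'i ^+ (\sum_(a <- [:: r']) n a + 3 * \sum_(b <- [:: r]) n b)%N.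
Proof.
rewrite mxE (eq_bigr (fun=> c * c * 'i ^+ (n r' + 3 * n r))) => [|k _].
  by rewrite sumr_const card_ord !big_seq1 -mulr_natr; ring.
rewrite adjmxE !EvecE rmorphM /= conj_c conj_expr_i mulrACA -exprD.
by rewrite [in LHS]expr_i_mod4 [in RHS]expr_i_mod4; congr (_ * 'i ^+ _); lia.
Qed.

Lemma sum_Evec_adj :
  \sum_(n : {ffun 'I_d -> 'I_4} | first0 n) adjmx (Evec n) *m Evec n =
  (d%:R / (d.+1)%:R) *: 1%:M :> 'M[C]_d.
Proof.
apply/matrixP => r r'; rewrite summxE; under eq_bigr do rewrite Evec_adj_entry.
rewrite -mulr_sumr sum_first0_expr_i_perm // perm_eq_seq1 !mxE eq_sym.
by case: (r == r'); rewrite ?mulr0 // mulr1 mulrAC sqr_c mulrC.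
Qed.

Let s : C := (sqrtC (d.+1)%:R)^-1.

Let conj_s : s^* = s.
Proof. by rewrite geC0_conj // invr_ge0 sqrtC_ge0 ler0n. Qed.

Let sqr_s : s * s = (d.+1)%:R^-1.
Proof. by rewrite -invfM -expr2 sqrtCK. Qed.

Lemma adjmx_Ediag j : adjmx (Ediag j) = Ediag j :> 'M[C]_d.
Proof.
by apply/matrixP => a b; rewrite adjmxE !mxE -/s rmorphM /= rmorph_nat conj_s andbC.
Qed.

Lemma sum_Ediag_conj (rho : 'M[C]_d) :
  \sum_(j < d) Ediag j *m rho *m adjmx (Ediag j) =
  (d.+1)%:R^-1 *: diag_mx (\row_j rho j j).
Proof.
rewrite diag_mx_sum_delta scaler_sumr; apply: eq_bigr => j _.
rewrite adjmx_Ediag /Ediag -scalemxAl -scalemxAr -scalemxAl mul_delta_mx_mx mxE !scalerA.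
by rewrite -/s sqr_s.
Qed.

Lemma sum_Ediag_adj : \sum_(j < d) adjmx (Ediag j) *m Ediag j = (d.+1)%:R^-1 *: 1%:M :> 'M[C]_d.
Proof.
rewrite mx1_sum_delta scaler_sumr; apply: eq_bigr => j _.
by rewrite adjmx_Ediag /Ediag -scalemxAl -scalemxAr mul_delta_mx scalerA -/s sqr_s.
Qed.

Lemma rank_Ediag j : \rank (Ediag j : 'M[C]_d) = 1%N.
Proof.
by rewrite /Ediag mxrank_scale_nz ?mxrank_delta // invr_eq0 sqrtC_eq0 pnatr_eq0.
Qed.

Lemma rank_Evec (n : {ffun 'I_d -> 'I_4}) : (0 < d)%N -> \rank (Evec n : 'M[C]_d) = 1%N.
Proof.
move=> d_gt0; apply/eqP; rewrite eqn_leq; apply/andP; split.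
  rewrite (leq_trans (mxrank_scale _ _)) // (leq_trans (mxrankM_maxl _ _)) //.
  by rewrite (leq_trans (mxrankM_maxl _ _)) // rank_leq_col.
rewrite lt0n mxrank_eq0; apply/eqP => /matrixP /(_ (Ordinal d_gt0) (Ordinal d_gt0)).
rewrite EvecE !mxE; apply/eqP; rewrite mulf_neq0 ?expf_neq0 ?neq0Ci //.
by rewrite invr_eq0 sqrtC_eq0 pnatr_eq0 muln_eq0 expn_eq0.
Qed.
End Kraus.

Section Channel.
Variables (C : numClosedFieldType) (d : nat).

Let w (l r : 'I_d) : C := if l == r then 1 else (sqrtC 2%:R)^-1.

Lemma symcE l r a b : symc l r a b = (perm_eq [:: a; b] [:: l; r])%:R * w l r.
Proof.
rewrite /symc /w perm_eq_pair; have [<-|neq_lr] := eqVneq l r; first by rewrite orbb mulr1.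
congr (_%:R * _).
by have [->|_] := eqVneq a l; rewrite ?(negbTE neq_lr) /= ?orbF ?addn0.
Qed.

Lemma sum_symc_mul (l r l' r' : 'I_d) :
  \sum_a \sum_b symc l r a b * symc l' r' a b = (perm_eq [:: l; r] [:: l'; r'])%:R :> C.
Proof.
under eq_bigr do under eq_bigr do rewrite !symcE mulrACA -mulrA.
rewrite sum_perm_pair_indicator (perm_catC [:: r] [:: l]) /=.
have [perm_lr | _] := boolP (perm_eq [:: l; r] [:: l'; r']); last by rewrite !mul0r mulr0 addr0.
have -> : w l' r' = w l r.
  by move: perm_lr; rewrite perm_eq_pair /w => /orP[] /andP[/eqP<- /eqP<-] //; rewrite eq_sym.
rewrite /w !mul1r; case: eqP => _ /=; first by rewrite mulr0n mul0r addr0 mulr1.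
by rewrite mulr1n mul1r -mulr2n -invfM -expr2 sqrtCK -[_ *+ 2]mulr_natr mulVf // pnatr_eq0.
Qed.

Let amp (l r : 'I_d) : C := sqrtC ((1 + (l == r))%:R / (d.+1)%:R).

Let sqr_amp l r : amp l r * amp l r = (1 + (l == r))%:R / (d.+1)%:R.
Proof. by rewrite -expr2 sqrtCK. Qed.

Lemma sum_cloner_iso_mul (l l' r r' : 'I_d) (x : C) :
  \sum_a \sum_b cloner_iso l a b r * x * (cloner_iso l' a b r')^* =
  amp l r * amp l' r' * x * (perm_eq [:: l; r] [:: l'; r'])%:R.
Proof.
have amp_ge0 l1 r1 : 0 <= amp l1 r1 by rewrite sqrtC_ge0 divr_ge0 ?ler0n.
have symc_ge0 a b : 0 <= symc l' r' a b :> C.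
  by rewrite symcE mulr_ge0 ?ler0n // /w; case: ifP; rewrite ?ler01 ?invr_ge0 ?sqrtC_ge0 ?ler0n.
rewrite -sum_symc_mul mulr_sumr; apply: eq_bigr => a _; rewrite mulr_sumr.
apply: eq_bigr => b _; rewrite /cloner_iso -/(amp l r) -/(amp l' r') rmorphM /= !geC0_conj //; ring.
Qed.

Lemma cloner_complE (rho : 'M[C]_d) :
  cloner_compl rho = (d.+1)%:R^-1 *: (\tr rho *: 1%:M + rho^T).
Proof.
apply/matrixP => r r'; rewrite !mxE.
under eq_bigr do rewrite exchange_big /=.
under eq_bigr do under eq_bigr do rewrite exchange_big /=.
rewrite exchange_big /=; under eq_bigr do rewrite exchange_big /=.
under eq_bigr do under eq_bigr do rewrite sum_cloner_iso_mul perm_eq_pair.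
have [<-|neq_rr'] := eqVneq r r'.
  rewrite (eq_bigr (fun l => \sum_l' (l == l')%:R * (amp l r * amp l' r * rho l l'))).
    rewrite sum_diag_indicator mulr1n /mxtrace mulr1 -(sum_indicator (fun l => rho l l) r).
    rewrite -big_split mulr_sumr; apply: eq_bigr => l _ /=; rewrite sqr_amp natrD; ring.
  move=> l _; apply: eq_bigr => l' _; rewrite mulrC andbT; congr ((nat_of_bool _)%:R * _).
  by have [->|_] := eqVneq l r; rewrite ?orbF // eq_sym orbb.
rewrite (eq_bigr (fun l => \sum_l' ((l == r') && (l' == r))%:R * (amp l r * amp l' r' * rho l l'))).
  rewrite sum_pair_indicator; have -> : amp r' r = amp r r' by rewrite /amp eq_sym.
  by rewrite mulr0n mulr0 add0r sqr_amp (negbTE neq_rr') addn0 mul1r.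
by move=> l _; apply: eq_bigr => l' _; rewrite mulrC andbF (eq_sym r).
Qed.
End Channel.

Theorem lemma2 (C : numClosedFieldType) (d : nat) (hd : (2 <= d)%N) :
  (forall rho : 'M[C]_d,
     cloner_compl rho =
       \sum_(j < d) Ediag j *m rho *m adjmx (Ediag j)
     + \sum_(n : {ffun 'I_d -> 'I_4} | first0 n) Evec n *m rho *m adjmx (Evec n))
  /\ \sum_(j < d) adjmx (Ediag j) *m Ediag j
     + \sum_(n : {ffun 'I_d -> 'I_4} | first0 n) adjmx (Evec n) *m Evec n
     = (1%:M : 'M[C]_d)
  /\ (forall j : 'I_d, \rank (@Ediag C d j) = 1%N)
  /\ (forall n : {ffun 'I_d -> 'I_4}, first0 n -> \rank (@Evec C d n) = 1%N).
Proof.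
split.
  move=> rho; rewrite cloner_complE sum_Ediag_conj sum_Evec_conj -scalerDr.
  by rewrite [X in _ = _ *: X]addrC subrK.
split.
  rewrite sum_Ediag_adj sum_Evec_adj -scalerDl -[X in X + _]mul1r -mulrDl nat1r.
  by rewrite mulfV ?scale1r // pnatr_eq0.
split; first exact: rank_Ediag.
by move=> n _; apply: rank_Evec; apply: leq_trans hd.
Qed.
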